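(* With notation as in the context, let $\overline{\mathcal P}=\{T^l(W): W\in\mathcal V,\ 0\le l\le|W|-1\}$. Then: (1) for each $k\ge1$ the sets $W\in\mathcal V$ with $|W|=k$ form a partition of $Y_k^0$, and $\overline{\mathcal P}$ is a quasi-partition of $X$; (2) $\overline{\mathcal P}$ is finer than $\mathcal P\cup\{E\}$ and than $\{Y_k^l: Y_k^l\ne\emptyset\}$; (3) if $\overline Z\in\overline{\mathcal P}$ and $\overline Z\subseteq Y_k^0$, then $T^i(\overline Z)\in\overline{\mathcal P}$ for $1\le i\le k-1$; and $\overline{\mathcal P}$ is the coarsest quasi-partition of $X$ with properties (2) and (3). Moreover, $\chi_{\overline Z}\in\mathcal B$ for every $\overline Z\in\overline{\mathcal P}$.
   Context: Let $X$ be an infinite, totally disconnected, compact metrizable space, $T$ a homeomorphism of $X$, $\mu$ a full (positive on nonempty open sets), ergodic, $T$-invariant Borel probability measure, $K$ a field with involution, $C_K(X)$ the $*$-algebra of locally constant functions $X\to K$, $\mathcal A=C_K(X)\rtimes_T\mathbb Z$ the algebraic crossed product (finite sums $\sum f_it^i$, $tf=(f\circ T^{-1})t$, $(ft^i)^*=t^{-i}f^*$). Let $E$ be a nonempty clopen set, $\mathcal P$ a partition of $X\setminus E$ (finite family of nonempty pairwise disjoint clopen sets with union $X\setminus E$), and $\mathcal B$ the unital $*$-subalgebra of $\mathcal A$ generated by $\{\chi_Zt:Z\in\mathcal P\}$. $\mathcal V$ is the set of nonempty sets $W=E\cap T^{-1}(Z_1)\cap\cdots\cap T^{-k+1}(Z_{k-1})\cap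 T^{-k}(E)$ with $k\ge1$, $Z_1,\dots,Z_{k-1}\in\mathcal P$, and $|W|:=k$. With $r_E(x)=\min\{l>0:T^l(x)\in E\}$ the first return map on $E$, $Y_k^l=T^l(r_E^{-1}(k))$ for $0\le l\le k-1$. A quasi-partition of $X$ is a finite or countable family of nonempty pairwise disjoint clopen sets whose union has full $\mu$-measure; a quasi-partition (or partition) $\mathcal Q_2$ is finer than $\mathcal Q_1$ if each member of $\mathcal Q_2$ is contained in a member of $\mathcal Q_1$. *)

From HB Require Import structures.
From mathcomp Require Import all_boot all_order all_algebra.
From mathcomp Require Import all_classical all_reals all_analysis.
Set Implicit Arguments. Unset Strict Implicit. Unset Printing Implicit Defensive.
Import Order.TTheory GRing.Theory Num.Theory.
Local Open Scope classical_set_scope.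
Local Open Scope ring_scope.

Section Partitions.
Variable X : topologicalType.

Definition clopen_disjoint_family (F : set (set X)) :=
  (forall Z, F Z -> Z !=set0 /\ clopen Z) /\
  (forall Z Z', F Z -> F Z' -> Z <> Z' -> Z `&` Z' = set0).

Definition is_partition (F : set (set X)) (A : set X) :=
  finite_set F /\ clopen_disjoint_family F /\ \bigcup_(Z in F) Z = A.

Definition quasi_partition {R : realType} (mu : set X -> \bar R)
  (F : set (set X)) :=
  countable F /\ clopen_disjoint_family F /\
  mu (\bigcup_(Z in F) Z) = 1%E.

Definition finer (F2 F1 : set (set X)) :=
  forall Z, F2 Z -> exists2 Z', F1 Z' & Z `<=` Z'.
End Partitions.

Section Towers.
Variables (X : Type) (T : X -> X) (E : set X) (P : set (set X)).

(* W is a member of V with |W| = k, i.e.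
   W = E ∩ T^{-1}(Z_1) ∩ ... ∩ T^{-k+1}(Z_{k-1}) ∩ T^{-k}(E), nonempty *)
Definition inV (k : nat) (W : set X) :=
  (1 <= k)%N /\
  exists Zs : nat -> set X,
    (forall i, (0 < i < k)%N -> P (Zs i)) /\
    W = [set x | E x /\ (forall i, (0 < i < k)%N -> Zs i (iter i T x))
                 /\ E (iter k T x)] /\
    W !=set0.

Definition first_return (k : nat) (x : X) :=
  E x /\ (0 < k)%N /\ E (iter k T x) /\
  (forall l, (0 < l < k)%N -> ~ E (iter l T x)).

Definition Ytower (k l : nat) : set X := iter l T @` (first_return k).

Definition Yfamily : set (set X) :=
  [set Y | exists k l, (1 <= k)%N /\ (l < k)%N /\ Y = Ytower k l /\ Y !=set0].

Definition Pbar : set (set X) :=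
  [set Z | exists k W l, inV k W /\ (l < k)%N /\ Z = iter l T @` W].

Definition tower_closed (Q : set (set X)) :=
  forall Z k i, Q Z -> Z `<=` Ytower k 0 -> (1 <= i < k)%N ->
    Q (iter i T @` Z).
End Towers.

(* An element sum_i f_i t^i is represented by a finite list of pairs   *)
(* (i, f_i); two lists represent the same element iff they have the    *)
(* same coefficient function [coef].                                   *)
Section CrossedProduct.
Variables (X : Type) (K : fieldType) (T Tinv : X -> X) (conj : K -> K).

(* T^n for n : int, Tinv being the inverse of T *)
Definition Tz (n : int) : X -> X :=
  match n with Posz k => iter k T | Negz k => iter k.+1 Tinv end.

Definition cpelt := seq (int * (X -> K)).

Definition coef (a : cpelt) (n : int) (x : X) : K :=
  \sum_(p <- a | p.1 == n) p.2 x.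

Definition cp_one : cpelt := [:: (0%Z, fun _ => 1)].
Definition cp_add (a b : cpelt) : cpelt := a ++ b.
Definition cp_scale (c : K) (a : cpelt) : cpelt :=
  [seq (p.1, fun x => c * p.2 x) | p <- a].
(* (f t^i)(g t^j) = f (g o T^{-i}) t^{i+j} *)
Definition cp_mul (a b : cpelt) : cpelt :=
  [seq (p.1 + q.1, fun x => p.2 x * q.2 (Tz (- p.1) x)) | p <- a, q <- b].
(* (f t^i)^* = t^{-i} f^* = (f^* o T^i) t^{-i} *)
Definition cp_star (a : cpelt) : cpelt :=
  [seq (- p.1, fun x => conj (p.2 (Tz p.1 x))) | p <- a].

Definition chi (A : set X) : X -> K := fun x => if asbool (A x) then 1 else 0.

Inductive inB (P : set (set X)) : cpelt -> Prop :=
| inB_one : inB P cp_one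
| inB_gen Z : P Z -> inB P [:: (1%Z, chi Z)]
| inB_add a b : inB P a -> inB P b -> inB P (cp_add a b)
| inB_scale c a : inB P a -> inB P (cp_scale c a)
| inB_mul a b : inB P a -> inB P b -> inB P (cp_mul a b)
| inB_star a : inB P a -> inB P (cp_star a)
| inB_eq a b : inB P a -> coef a = coef b -> inB P b.
End CrossedProduct.

From Pilot Require Import Defs.
From HB Require Import structures.
From mathcomp Require Import all_boot all_order all_algebra.
From mathcomp Require Import all_classical all_reals all_analysis.
Import Order.TTheory GRing.Theory Num.Theory.
Local Open Scope classical_set_scope.
Local Open Scope ring_scope.
Set Implicit Arguments. Unset Strict Implicit. Unset Printing Implicit Defensive.

(* A point whose orbit meets E at some time <= 0 and at some time > 0 lies in
   exactly one level Y_k^l of the towers over E, and inside Y_k^0 the itinerary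
   through P up to the first return to E singles out one W in V; so the sets
   T^l(W) are disjoint clopen sets covering all such points.  The remaining
   points either never meet E, an invariant closed set missing E and hence null
   by ergodicity, or meet E a last time in the past or in the future, hence lie
   in the orbit of a wandering set [E minus the points returning to E], null by
   invariance.  For coarseness, a quasi-partition Q is dense, so a member of Q
   inside Y_k^l is T^l of a member Z of Q inside Y_k^0; property (3) keeps each
   T^i(Z) inside one member of P, i.e. Z lies in one W.  Finally chi_W is a
   product of chi_E and iterated conjugates chi_Z (f o T) = (chi_Z t)^* f (chi_Z t)
   of generators of B, with chi_E = 1 - sum of the chi_Z, Z in P. *)

Lemma exists_minimal (p : nat -> Prop) n :
  p n -> exists2 m, p m & forall j, p j -> (m <= j)%N.
Proof.
move=> pn; have /ex_minnP[m /asboolP pm minm] : exists n, `[< p n >].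
  by exists n; exact/asboolP.
by exists m => // j /asboolP /minm.
Qed.

Lemma disjoint_of_meet_eq (X : Type) (F : set (set X)) :
  (forall Z Z' x, F Z -> F Z' -> Z x -> Z' x -> Z = Z') ->
  forall Z Z', F Z -> F Z' -> Z <> Z' -> Z `&` Z' = set0.
Proof.
move=> Feq Z Z' FZ FZ' neq; apply/seteqP; split => // x [Zx Z'x].
exact: neq (Feq _ _ _ FZ FZ' Zx Z'x).
Qed.

Section Iterates.
Local Open Scope nat_scope.
Variables (X : Type) (T Tinv : X -> X).
Hypotheses (TK : cancel T Tinv) (TinvK : cancel Tinv T).

Lemma iterK n : cancel (iter n T) (iter n Tinv).
Proof. by elim: n => [|n IH] x //; rewrite iterSr iterS TK IH. Qed.

Lemma iterKV n : cancel (iter n Tinv) (iter n T).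
Proof. by elim: n => [|n IH] x //; rewrite iterSr iterS TinvK IH. Qed.

Lemma iter_inj n : injective (iter n T).
Proof. exact: can_inj (iterK n). Qed.

Lemma image_iter n (A : set X) : iter n T @` A = iter n Tinv @^-1` A.
Proof.
apply/seteqP; split => [_ [y Ay <-]|x Ax] /=; first by rewrite iterK.
by exists (iter n Tinv x); rewrite ?iterKV.
Qed.

Lemma iter_subK k l x : k <= l -> iter k T (iter l Tinv x) = iter (l - k) Tinv x.
Proof. by move=> kl; rewrite -{1}(subnKC kl) iterD iterKV. Qed.

Lemma iter_subKV k l x : l <= k -> iter k T (iter l Tinv x) = iter (k - l) T x.
Proof. by move=> lk; rewrite -{1}(subnK lk) iterD iterKV. Qed.

Definition no_visit (S : X -> X) (E : set X) := [set x | forall n, ~ E (iter n S x)].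
Definition no_return (S : X -> X) (E : set X) :=
  [set x | forall m, 0 < m -> ~ E (iter m S x)].
Definition exit_set (S : X -> X) (E : set X) := E `&` no_return S E.

Lemma no_return_cover E :
  no_return T E `<=`
  (no_visit T E `&` no_visit Tinv E) `|` \bigcup_l (iter l Tinv @^-1` exit_set T E).
Proof.
move=> x xE; have [pastE|] := pselect (no_visit Tinv E x).
  by left; split => // -[|m]; [exact: (pastE 0)|exact: xE].
move=> /existsNP[l0 /contrapT El0]; right.
have [l El minl] := @exists_minimal (fun l => E (iter l Tinv x)) _ El0.
exists l => //; split => // m m0.
have [ml|lm] := leqP m l.
  rewrite iter_subK // => /minl; rewrite leqNgt => /negP; apply.
  by rewrite ltn_subrL m0 (leq_trans m0 ml).
by rewrite iter_subKV ?(ltnW lm) //; apply: xE; rewrite subn_gt0.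
Qed.

End Iterates.

Section Towers.
Local Open Scope nat_scope.
Variables (X : Type) (T Tinv : X -> X).
Hypotheses (TK : cancel T Tinv) (TinvK : cancel Tinv T).
Variables (E : set X) (P : set (set X)).
Hypothesis P_disj : forall Z Z', P Z -> P Z' -> Z <> Z' -> Z `&` Z' = set0.
Hypothesis P_subC : forall Z, P Z -> Z `<=` ~` E.
Hypothesis P_cover : forall x, ~ E x -> exists2 Z, P Z & Z x.

Lemma first_return_uniq k k' x :
  first_return T E k x -> first_return T E k' x -> k = k'.
Proof.
move=> [_ [k0 [Ek minE]]] [_ [k0' [Ek' minE']]].
by case: (ltngtP k k') => // [kk'|k'k]; [case: (minE' k)|case: (minE k')];
  rewrite ?k0 ?k0'.
Qed.

Lemma first_return_orbit_uniq k k' l l' y y' :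
  first_return T E k y -> first_return T E k' y' -> l < k -> l' < k' ->
  iter l T y = iter l' T y' -> [/\ l = l', k = k' & y = y'].
Proof.
wlog ll' : k k' l l' y y' / l <= l'.
  move=> wlog_ll' Fy Fy' lk lk' eqy; have [|l'l] := leqP l l'.
    by move=> ll'; exact: wlog_ll'.
  by have [-> -> ->] := wlog_ll' _ _ _ _ _ _ (ltnW l'l) Fy' Fy lk' lk (esym eqy).
move=> Fy Fy' lk lk' eqy.
have {}eqy : y = iter (l' - l) T y'.
  by apply: (@iter_inj _ _ _ TK l); rewrite -iterD subnKC.
case: (posnP (l' - l)) => d0; last first.
  case: Fy => Ey _; case: Fy' => _ [_ [_ /(_ (l' - l))]].
  by rewrite -eqy d0 (leq_ltn_trans (leq_subr _ _) lk') => /(_ isT).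
have ll : l = l' by apply/eqP; rewrite eqn_leq ll' -subn_eq0 d0.
move: eqy; rewrite d0 => eqy; subst y.
by split => //; exact: first_return_uniq Fy Fy'.
Qed.

Lemma Ytower0 k : Ytower T E k 0 = first_return T E k.
Proof. exact: image_id. Qed.

Lemma Ytower_disj k k' l l' x : l < k -> l' < k' ->
  Ytower T E k l x -> Ytower T E k' l' x -> k = k' /\ l = l'.
Proof.
move=> lk lk' [y Fy <-] [y' Fy' eqy].
by have [-> -> _] := first_return_orbit_uniq Fy Fy' lk lk' (esym eqy).
Qed.

Definition Vset (Zs : nat -> set X) (k : nat) : set X :=
  [set x | E x /\ (forall i, 0 < i < k -> Zs i (iter i T x)) /\ E (iter k T x)].

Lemma Vset_sub_first_return Zs k : 0 < k ->
  (forall i, 0 < i < k -> P (Zs i)) -> Vset Zs k `<=` first_return T E k.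
Proof.
move=> k0 PZs x [Ex [xZs Ek]]; split => //; split => //; split => // i ik.
exact: P_subC (PZs i ik) _ (xZs i ik).
Qed.

Lemma inV_sub_first_return k W : inV T E P k W -> W `<=` first_return T E k.
Proof. by move=> [k0 [Zs [PZs [-> _]]]]; exact: Vset_sub_first_return. Qed.

Lemma inV_neq0 k W : inV T E P k W -> W !=set0.
Proof. by case=> _ [Zs [_ []]]. Qed.

Lemma inV_eq k W W' x : inV T E P k W -> inV T E P k W' -> W x -> W' x -> W = W'.
Proof.
move=> [_ [Zs [PZs [-> _]]]] [_ [Zs' [PZs' [-> _]]]] [_ [xZs _]] [_ [xZs' _]].
have eqZs i : 0 < i < k -> Zs i = Zs' i.
  move=> ik; apply: contrapT => /(P_disj (PZs i ik) (PZs' i ik)) /seteqP[+ _].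
  by apply; split; [exact: xZs|exact: xZs'].
by apply/seteqP; split => y [Ey [yZs Ek]]; do 2!split => //;
  move=> i ik; [rewrite -eqZs|rewrite eqZs] => //; [exact: yZs|exact: yZs].
Qed.

Lemma inV_of_first_return k A : 0 < k -> A `<=` first_return T E k -> A !=set0 ->
  (forall i, 0 < i < k -> exists2 Z, P Z & iter i T @` A `<=` Z) ->
  exists2 W, inV T E P k W & A `<=` W.
Proof.
move=> k0 AF [a Aa] PA.
have /choice[Zs PZs] : forall i, exists Z, 0 < i < k -> P Z /\ iter i T @` A `<=` Z.
  by move=> i; case: (boolP (0 < i < k)) => [/PA[Z PZ AZ]|_]; [exists Z|exists set0].
have AV : A `<=` Vset Zs k.
  move=> x Ax; have [Ex [_ [Ek _]]] := AF x Ax; split => //; split => // i ik.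
  by case: (PZs i ik) => _; apply; exists x.
exists (Vset Zs k) => //; split => //; exists Zs; split; first by move=> i /PZs[].
by split => //; exists a; exact: AV.
Qed.

Lemma inV_cover k x : first_return T E k x -> exists2 W, inV T E P k W & W x.
Proof.
move=> Fx; have [_ [k0 [_ notE]]] := Fx.
have [|||W VW /(_ x erefl)] := @inV_of_first_return k [set x] k0; last by exists W.
- by move=> _ ->.
- by exists x.
- by move=> i /notE /P_cover[Z PZ Zx]; exists Z => // _ [_ -> <-].
Qed.

Lemma bigcup_inV k : \bigcup_(W in inV T E P k) W = Ytower T E k 0.
Proof.
rewrite Ytower0; apply/seteqP; split => [x [W /inV_sub_first_return]|x /inV_cover].
  exact.
by case=> W VW Wx; exists W.
Qed.

Lemma Pbar_eq Z Z' x : Pbar T E P Z -> Pbar T E P Z' -> Z x -> Z' x -> Z = Z'.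
Proof.
move=> [k [W [l [VW [lk ->]]]]] [k' [W' [l' [VW' [lk' ->]]]]] [y Wy <-] [y' W'y' eqy].
have [-> ek eyy'] := first_return_orbit_uniq (inV_sub_first_return VW' W'y')
  (inV_sub_first_return VW Wy) lk' lk eqy.
by subst k' y'; rewrite (inV_eq VW VW' Wy W'y').
Qed.

Lemma Pbar_neq0 Z : Pbar T E P Z -> Z !=set0.
Proof. by move=> [k [W [l [/inV_neq0[y Wy] [_ ->]]]]]; exists (iter l T y), y. Qed.

Lemma Pbar_subset_PE Z : Pbar T E P Z -> exists2 Z', (P `|` [set E]) Z' & Z `<=` Z'.
Proof.
move=> [k [W [l [[_ [Zs [PZs [-> _]]]] [lk ->]]]]].
case: (posnP l) => [->|l0]; first by exists E; [right|move=> z [x [Ex _] <-]].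
exists (Zs l); first by left; apply: PZs; rewrite l0.
by move=> z [x [_ [xZs _]] <-]; apply: xZs; rewrite l0.
Qed.

Lemma Pbar_subset_Ytower Z : Pbar T E P Z -> exists2 Y, Yfamily T E Y & Z `<=` Y.
Proof.
move=> [k [W [l [VW [lk ->]]]]]; have [y Wy] := inV_neq0 VW.
exists (Ytower T E k l); last first.
  by move=> z [x Wx <-]; exists x => //; exact: inV_sub_first_return VW _ Wx.
exists k, l; split; first exact: leq_ltn_trans (leq0n l) lk.
do 2!split => //.
by exists (iter l T y), y => //; exact: inV_sub_first_return VW _ Wy.
Qed.

Lemma Pbar_tower_closed : tower_closed T E (Pbar T E P).
Proof.
move=> Z k' i [k [W [l [VW [lk ->]]]]] WY /andP[i0 ik'].
have [y Wy] := inV_neq0 VW.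
have /WY Y'y : (iter l T @` W) (iter l T y) by exists y.
have Yy : Ytower T E k l (iter l T y).
  by exists y => //; exact: inV_sub_first_return VW _ Wy.
have [ek l0] := Ytower_disj lk (leq_ltn_trans (leq0n i) ik') Yy Y'y.
subst k' l; exists k, W, i; do 2!split => //.
by rewrite image_id.
Qed.

Lemma Ytower_of_visits x l m : E (iter l Tinv x) -> 0 < m -> E (iter m T x) ->
  exists k j, j < k /\ Ytower T E k j x.
Proof.
move=> El m0 Em.
have [l0 El0 minl0] := @exists_minimal (fun l => E (iter l Tinv x)) _ El.
pose y := iter l0 Tinv x.
have Eyml0 : E (iter (m + l0) T y) by rewrite iterD iterKV.
have [k [k0 Eyk] mink] := @exists_minimal (fun k => 0 < k /\ E (iter k T y)) _
  (conj (leq_trans m0 (leq_addr l0 m)) Eyml0).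
have l0k : l0 < k.
  rewrite ltnNge; apply/negP => kl0; move: Eyk; rewrite iter_subK // => /minl0.
  by rewrite leqNgt ltn_subrL k0 (leq_trans k0 kl0).
exists k, l0; split => //; exists y; last exact: iterKV.
split => //; split => //; split => // j /andP[j0 jk] /(conj j0) /mink.
by rewrite leqNgt jk.
Qed.

Lemma Pbar_cover x l m : E (iter l Tinv x) -> 0 < m -> E (iter m T x) ->
  exists2 Z, Pbar T E P Z & Z x.
Proof.
move=> El m0 Em; have [k [j [jk [y /inV_cover[W VW Wy] <-]]]] := Ytower_of_visits El m0 Em.
by exists (iter j T @` W); [exists k, W, j|exists y].
Qed.

Definition itinerary (Zs : nat -> set X) (n : nat) : set X :=
  [set x | (forall i, i < n -> Zs i (iter i T x)) /\ E (iter n T x)].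

Lemma itinerary0 Zs : itinerary Zs 0 = E.
Proof. by apply/seteqP; split => [x []|x Ex]. Qed.

Lemma itineraryS Zs n :
  itinerary Zs n.+1 = Zs 0 `&` T @^-1` itinerary (fun i => Zs i.+1) n.
Proof.
apply/seteqP; split => [x [xZs Ex]|x [Zx [xZs Ex]]].
  by split; [exact: xZs|split => [i ni|]; rewrite -iterSr //; exact: xZs].
by split => [[|i] ni //|]; rewrite iterSr //; exact: xZs.
Qed.

Lemma Vset_itinerary Zs k : 0 < k ->
  Vset Zs k = E `&` T @^-1` itinerary (fun i => Zs i.+1) k.-1.
Proof.
case: k => // k _; apply/seteqP; split => [x [Ex [xZs Ek]]|x [Ex [xZs Ek]]].
  by split => //; split => [i ik|]; rewrite -iterSr //; exact: xZs.
by split => //; split => [[|i] ik //|]; rewrite iterSr //; exact: xZs.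
Qed.

Definition itineraries n :=
  [set itinerary Zs n | Zs in [set Zs | forall i, i < n -> P (Zs i)]].

Lemma itineraries_finite n : finite_set P -> finite_set (itineraries n).
Proof.
move=> Pfin; elim: n => [|n IH].
  apply: sub_finite_set (finite_set1 E) => _ [Zs _ <-]; exact: itinerary0.
apply: sub_finite_set (finite_image2 (fun Z I => Z `&` T @^-1` I) Pfin IH).
move=> _ [Zs PZs <-]; rewrite itineraryS.
exists (Zs 0); first exact: PZs.
exists (itinerary (fun i => Zs i.+1) n) => //.
by exists (fun i => Zs i.+1) => // i ni; exact: PZs.
Qed.

Lemma inV_finite k : finite_set P -> finite_set (inV T E P k).
Proof.
move=> Pfin; apply: sub_finite_set (finite_image (fun I => E `&` T @^-1` I)
  (itineraries_finite k.-1 Pfin)).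
move=> _ [k0 [Zs [PZs [-> _]]]]; rewrite -/(Vset Zs k) Vset_itinerary //.
exists (itinerary (fun i => Zs i.+1) k.-1) => //.
by exists (fun i => Zs i.+1) => // i ik; apply: PZs; rewrite /= -(prednK k0) ltnS.
Qed.

Lemma Pbar_countable : finite_set P -> countable (Pbar T E P).
Proof.
move=> Pfin; pose F k l := [set iter l T @` W | W in inV T E P k].
have: countable (\bigcup_(k in setT) \bigcup_(l in setT) F k l).
  apply: bigcup_countable => [|k _]; first exact: countableP.
  apply: bigcup_countable => [|l _]; first exact: countableP.
  exact/finite_set_countable/finite_image/inV_finite.
apply: sub_countable; apply: subset_card_le => _ [k [W [l [VW [_ ->]]]]].
by exists k => //; exists l => //; exists W.
Qed.

End Towers.

Lemma continuous_iter (X : topologicalType) (T : X -> X) :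
  continuous T -> forall n, continuous (iter n T).
Proof.
move=> T_cont n; elim: n => [|n IH] x; first exact: cvg_id.
exact (continuous_comp (IH x) (@T_cont (iter n T x))).
Qed.
Arguments continuous_iter {X T} T_cont n.

Lemma partitionC_props (X : topologicalType) (E : set X) (P : set (set X)) :
  is_partition P (~` E) ->
  [/\ finite_set P, forall Z, P Z -> clopen Z,
      forall Z Z', P Z -> P Z' -> Z <> Z' -> Z `&` Z' = set0,
      forall Z, P Z -> Z `<=` ~` E & forall x, ~ E x -> exists2 Z, P Z & Z x].
Proof.
move=> [P_fin [[P_cl P_disj] P_cup]]; split => //.
- by move=> Z /P_cl[].
- by move=> Z PZ x Zx; rewrite -P_cup; exists Z.
- move=> x nEx; have [Z PZ Zx] : (\bigcup_(Z in P) Z) x by rewrite P_cup.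
  by exists Z.
Qed.

Section Topology.
Variables (X : topologicalType) (T : X -> X) (E : set X).
Hypotheses (T_cont : continuous T) (E_clopen : clopen E).

Lemma no_visit_closed : closed (no_visit T E).
Proof.
have -> : no_visit T E = \bigcap_n (iter n T @^-1` ~` E).
  by apply/seteqP; split => x xE n; [move=> _|]; exact: xE.
apply: closed_bigI => n _; move/continuous_closedP: (continuous_iter T_cont n).
by apply; rewrite closedC; case: E_clopen.
Qed.

Lemma no_return_closed : closed (no_return T E).
Proof.
have -> : no_return T E = \bigcap_(m in [set m | (0 < m)%N]) (iter m T @^-1` ~` E).
  by apply/seteqP; split => x xE m; exact: xE.
apply: closed_bigI => m _; move/continuous_closedP: (continuous_iter T_cont m).
by apply; rewrite closedC; case: E_clopen.
Qed.

Lemma exit_set_closed : closed (exit_set T E).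
Proof. by apply: closedI no_return_closed; case: E_clopen. Qed.

Lemma itinerary_clopen Zs n : (forall i, (i < n)%N -> clopen (Zs i)) ->
  clopen (itinerary T E Zs n).
Proof.
elim: n Zs => [|n IH] Zs Zs_clopen; first by rewrite itinerary0.
rewrite itineraryS; apply: clopenI; first exact: Zs_clopen.
by apply: preimage_clopen T_cont; apply: IH => i ni; exact: Zs_clopen.
Qed.

Variable P : set (set X).
Hypothesis P_clopen : forall Z, P Z -> clopen Z.

Lemma inV_clopen k W : inV T E P k W -> clopen W.
Proof.
move=> [k0 [Zs [PZs [-> _]]]]; rewrite -/(Vset T E Zs k) Vset_itinerary //.
apply: clopenI => //; apply: preimage_clopen T_cont; apply: itinerary_clopen => i ik.
by apply/P_clopen/PZs; rewrite /= -(prednK k0) ltnS.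
Qed.

Hypothesis P_fin : finite_set P.
Hypothesis P_disj : forall Z Z', P Z -> P Z' -> Z <> Z' -> Z `&` Z' = set0.
Hypothesis P_subC : forall Z, P Z -> Z `<=` ~` E.
Hypothesis P_cover : forall x, ~ E x -> exists2 Z, P Z & Z x.

Lemma inV_partition k : is_partition (inV T E P k) (Ytower T E k 0).
Proof.
split; first exact: inV_finite.
split; last exact: bigcup_inV.
split; last by apply: disjoint_of_meet_eq => W W' x; exact: inV_eq.
by move=> W VW; split; [exact: inV_neq0 VW|exact: inV_clopen VW].
Qed.

Variable Tinv : X -> X.
Hypotheses (Tinv_cont : continuous Tinv) (TK : cancel T Tinv) (TinvK : cancel Tinv T).

Lemma Pbar_clopen Z : Pbar T E P Z -> clopen Z.
Proof.
move=> [k [W [l [VW [_ ->]]]]]; rewrite (image_iter TK TinvK).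
apply: preimage_clopen; [exact: inV_clopen VW|exact: (continuous_iter Tinv_cont)].
Qed.

Lemma Pbar_clopen_disjoint : clopen_disjoint_family (Pbar T E P).
Proof.
split; last by apply: disjoint_of_meet_eq => Z Z' x; exact: Pbar_eq.
by move=> Z PbZ; split; [exact: Pbar_neq0 PbZ|exact: Pbar_clopen].
Qed.

End Topology.

Section Coarsest.
Local Open Scope nat_scope.
Variables (X : topologicalType) (T Tinv : X -> X).
Hypotheses (TK : cancel T Tinv) (TinvK : cancel Tinv T) (T_cont : continuous T).
Variables (E : set X) (P Q : set (set X)).
Hypothesis Q_part : clopen_disjoint_family Q.
Hypothesis Q_dense : forall U, open U -> U !=set0 -> (U `&` \bigcup_(Z in Q) Z) !=set0.
Hypothesis Q_finer_PE : finer Q (P `|` [set E]).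
Hypothesis Q_finer_Y : finer Q (Yfamily T E).
Hypothesis Q_tower : tower_closed T E Q.

Lemma Q_eq Z Z' x : Q Z -> Q Z' -> Z x -> Z' x -> Z = Z'.
Proof.
move=> QZ QZ' Zx Z'x; apply: contrapT => /(Q_part.2 _ _ QZ QZ') /seteqP[+ _].
by move/(_ x (conj Zx Z'x)).
Qed.

Lemma Q_image_first_return Z : Q Z -> exists k l Z',
  [/\ l < k, Q Z', Z' `<=` first_return T E k & Z = iter l T @` Z'].
Proof.
move=> QZ; have [_ [k [l [k0 [lk [-> _]]]]] ZY] := Q_finer_Y QZ.
have [[z Zz] [Zopen _]] := Q_part.1 _ QZ; have [y0 _ Ty0] := ZY _ Zz.
have [||x [/= Zlx [Z' QZ' Z'x]]] := @Q_dense (iter l T @^-1` Z).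
- by move/continuousP: (continuous_iter T_cont l); apply.
- by exists y0; rewrite /= Ty0.
have [y Fy /(@iter_inj _ _ _ TK) eyx] := ZY _ Zlx; subst y.
have Z'F : Z' `<=` first_return T E k.
  have [_ [k' [l' [_ [lk' [-> _]]]]] Z'Y] := Q_finer_Y QZ'.
  have Y0x : Ytower T E k 0 x by rewrite Ytower0.
  have [ekk' l'0] := Ytower_disj TK k0 lk' Y0x (Z'Y _ Z'x).
  by rewrite -Ytower0 ekk' l'0.
have QlZ' : Q (iter l T @` Z').
  case: (posnP l) => [->|l0]; first by rewrite image_id.
  by apply: (@Q_tower Z' k l QZ'); [rewrite Ytower0|rewrite l0 lk].
exists k, l, Z'; split => //.
by apply: (Q_eq QZ QlZ' Zlx); exists x.
Qed.

Lemma Q_sub_inV Z k : Q Z -> Z `<=` first_return T E k ->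
  exists2 W, inV T E P k W & Z `<=` W.
Proof.
move=> QZ ZF; have [[x Zx] _] := Q_part.1 _ QZ.
have [_ [k0 [_ notE]]] := ZF x Zx.
apply: inV_of_first_return => //; first by exists x.
move=> i ik; have QiZ : Q (iter i T @` Z).
  by apply: (@Q_tower Z k i QZ) => //; rewrite Ytower0.
have [Zi [PZi|/= EZi] ZiZ] := Q_finer_PE QiZ; first by exists Zi.
by case: (notE i ik); rewrite -EZi; apply: ZiZ; exists x.
Qed.

Lemma finer_Pbar : finer Q (Pbar T E P).
Proof.
move=> Z /Q_image_first_return[k [l [Z' [lk QZ' Z'F ->]]]].
have [W VW Z'W] := Q_sub_inV QZ' Z'F.
exists (iter l T @` W); first by exists k, W, l.
by move=> z [x /Z'W Wx <-]; exists x.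
Qed.

End Coarsest.

Section Measure.
Variables (R : realType) (X : ptopologicalType).
Variable mu : probability (g_sigma_algebraType (@open X)) R.
Local Notation mT := (g_sigma_algebraType (@open X)).

Lemma measurable_open (A : set X) : open A -> measurable (A : set mT).
Proof. exact: sub_sigma_algebra. Qed.

Lemma measurable_closed (A : set X) : closed A -> measurable (A : set mT).
Proof.
by move=> cA; rewrite -(setCK A); apply: measurableC; apply: measurable_open; rewrite openC.
Qed.

Lemma measure_full_of_negligibleC (A : set X) : measurable (A : set mT) ->
  mu.-negligible (~` A) -> mu A = 1%E.
Proof.
move=> mA /negligibleP -/(_ (measurableC mA)) muC.
by rewrite -(probability_setT mu) -(setUv A) measureU ?muC ?adde0 //;
  [exact: measurableC|exact: setICr].
Qed.

Lemma full_measure_meets (A B : set X) :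
  measurable (A : set mT) -> measurable (B : set mT) ->
  mu A = 1%E -> (0 < mu B)%E -> (B `&` A) !=set0.
Proof.
move=> mA mB muA muB; apply: contrapT => BA0.
have : (mu B <= mu (~` A))%E.
  apply: le_measure; rewrite ?inE; [exact: mB|exact: measurableC|].
  by move=> x Bx Ax; apply: BA0; exists x.
by rewrite probability_setC // muA subee // => /le_gtF; rewrite muB.
Qed.

Lemma quasi_partition_dense (Q : set (set X)) :
  (forall U, open U -> U !=set0 -> (0 < mu U)%E) -> quasi_partition mu Q ->
  forall U, open U -> U !=set0 -> (U `&` \bigcup_(Z in Q) Z) !=set0.
Proof.
move=> mu_full [_ [Q_part Q_full]] U oU U0.
have mQ : measurable (\bigcup_(Z in Q) Z : set mT).
  by apply: measurable_open; apply: bigcup_open => Z /Q_part.1[_ []].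
exact: full_measure_meets mQ (measurable_open oU) Q_full (mu_full U oU U0).
Qed.

Section Wandering.
Variables (S S' : X -> X) (E : set X).
Hypotheses (S_cont : continuous S) (S'_cont : continuous S') (E_clopen : clopen E).
Hypothesis S_inv : forall A, closed A -> mu (S @^-1` A) = mu A.
Hypothesis S'_inv : forall A, closed A -> mu (S' @^-1` A) = mu A.

Let exit_closed := exit_set_closed S_cont E_clopen.

(* [S^-1 (no_return S E)] splits into [no_return S E] and [S^-1 (exit_set S E)],
   so invariance forces the latter to be null. *)
Lemma exit_set_null : mu (exit_set S E) = 0%E.
Proof.
have split_pre : S @^-1` no_return S E = no_return S E `|` S @^-1` exit_set S E.
  apply/seteqP; split => [x xE|x [xE|[ESx xE]] m m0].
  - have [ESx|nESx] := pselect (E (S x)); first by right.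
    left => -[//|m _]; rewrite iterSr.
    by case: m => [//|m]; exact: xE.
  - by rewrite -iterSr; exact: xE.
  - exact: xE.
have disj : no_return S E `&` S @^-1` exit_set S E = set0.
  by apply/seteqP; split => // x [xE [ESx _]]; exact: (xE 1%N).
have m_exit : measurable (S @^-1` exit_set S E : set mT).
  apply: measurable_closed; move/continuous_closedP: S_cont; apply.
  exact: exit_closed.
have m_noret := measurable_closed (no_return_closed S_cont E_clopen).
move: (S_inv (no_return_closed S_cont E_clopen)); rewrite split_pre measureU // addeC.
move=> /(congr1 (fun z => z - mu (no_return S E))%E).
rewrite addeK ?subee ?fin_num_measure // => muS0.
by rewrite -(S_inv exit_closed).
Qed.

Lemma iter_invariant l A : closed A -> mu (iter l S' @^-1` A) = mu A.
Proof.
elim: l A => [//|l IH] A cA.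
change (mu (iter l S' @^-1` (S' @^-1` A)) = mu A).
by rewrite IH ?S'_inv //; move/continuous_closedP: S'_cont; apply.
Qed.

Lemma exit_orbit_negligible :
  mu.-negligible (\bigcup_l (iter l S' @^-1` exit_set S E)).
Proof.
apply: negligible_bigcup => l; apply/negligibleP.
  apply: measurable_closed; move/continuous_closedP: (continuous_iter S'_cont l).
  by apply; exact: exit_closed.
exact: etrans (iter_invariant l exit_closed) exit_set_null.
Qed.

End Wandering.

Section FullMeasure.
Variables (T Tinv : X -> X) (E : set X) (P : set (set X)).
Hypotheses (TK : cancel T Tinv) (TinvK : cancel Tinv T).
Hypotheses (T_cont : continuous T) (Tinv_cont : continuous Tinv).
Hypotheses (E_clopen : clopen E) (mu_E : (0 < mu E)%E).
Hypothesis P_fin : finite_set P.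
Hypothesis P_clopen : forall Z, P Z -> clopen Z.
Hypothesis P_disj : forall Z Z', P Z -> P Z' -> Z <> Z' -> Z `&` Z' = set0.
Hypothesis P_subC : forall Z, P Z -> Z `<=` ~` E.
Hypothesis P_cover : forall x, ~ E x -> exists2 Z, P Z & Z x.
Hypothesis mu_inv : forall A, measurable (A : set mT) -> mu (T @^-1` A) = mu A.
Hypothesis mu_erg : forall A, measurable (A : set mT) ->
  T @^-1` A = A -> mu A = 0%E \/ mu A = 1%E.

Lemma T_invariant A : closed A -> mu (T @^-1` A) = mu A.
Proof. by move=> cA; apply: mu_inv; exact: measurable_closed. Qed.

Lemma Tinv_invariant A : closed A -> mu (Tinv @^-1` A) = mu A.
Proof.
move=> cA; have TTinvA : T @^-1` (Tinv @^-1` A) = A.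
  by apply/seteqP; split => x /=; rewrite TK.
rewrite -[in RHS]TTinvA mu_inv //.
by apply: measurable_closed; move/continuous_closedP: Tinv_cont; apply.
Qed.

Lemma no_visit_invariant : T @^-1` (no_visit T E `&` no_visit Tinv E) =
  no_visit T E `&` no_visit Tinv E.
Proof.
apply/seteqP; split => x /= [fwd bwd]; split.
- case=> [|n]; last by rewrite iterSr; exact: fwd.
  by have := bwd 1%N; rewrite /= TK.
- by move=> n; have := bwd n.+1; rewrite iterSr TK.
- by move=> n; have := fwd n.+1; rewrite iterSr.
- case=> [|n]; first exact: (fwd 1%N).
  by rewrite iterSr TK; exact: bwd.
Qed.

Lemma no_visit_negligible : mu.-negligible (no_visit T E `&` no_visit Tinv E).
Proof.
have cI := closedI (no_visit_closed T_cont E_clopen) (no_visit_closed Tinv_cont E_clopen).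
apply/negligibleP; first exact: measurable_closed.
case: (mu_erg (measurable_closed cI) no_visit_invariant) => // muI.
have mE : measurable (E : set mT) by apply: measurable_open; case: E_clopen.
have [x [Ex [xI _]]] := full_measure_meets (measurable_closed cI) mE muI mu_E.
by case: (xI 0%N).
Qed.

Lemma Pbar_full_measure : mu (\bigcup_(Z in Pbar T E P) Z) = 1%E.
Proof.
have mU : measurable (\bigcup_(Z in Pbar T E P) Z : set mT).
  apply: measurable_open; apply: bigcup_open => Z PbZ.
  by case: (Pbar_clopen T_cont E_clopen P_clopen Tinv_cont TK TinvK PbZ).
apply: measure_full_of_negligibleC mU _.
have N1 := exit_orbit_negligible T_cont Tinv_cont E_clopen T_invariant Tinv_invariant.
have N2 := exit_orbit_negligible Tinv_cont T_cont E_clopen Tinv_invariant T_invariant.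
have N0 := no_visit_negligible.
apply: negligibleS (negligibleU (negligibleU N0 N1) (negligibleU N0 N2)) => x nUx.
have [fwd|bwd] : no_return T E x \/ no_return Tinv E x.
  apply: contrapT => /not_orP[/existsNP[m /not_implyP[m0 /contrapT Em]]].
  move=> /existsNP[l /not_implyP[_ /contrapT El]]; apply: nUx.
  by have [Z PZ Zx] := Pbar_cover TinvK P_cover El m0 Em; exists Z.
- by case: (no_return_cover TinvK fwd) => ?; [left; left|left; right].
- by case: (no_return_cover TK bwd) => [[? ?]|?]; [right; left; split|right; right].
Qed.

Lemma Pbar_quasi_partition : quasi_partition mu (Pbar T E P).
Proof.
split; first exact: Pbar_countable.
split; last exact: Pbar_full_measure.
exact: (Pbar_clopen_disjoint T_cont E_clopen P_clopen P_disj P_subC Tinv_cont TK TinvK).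
Qed.

End FullMeasure.

End Measure.

Section CrossedProductAlgebra.
Variables (X : Type) (K : fieldType) (T Tinv : X -> X).
Hypotheses (TK : cancel T Tinv) (TinvK : cancel Tinv T).
Variable conj : {rmorphism K -> K}.
Variables (E : set X) (P : set (set X)).
Hypothesis P_disj : forall Z Z', P Z -> P Z' -> Z <> Z' -> Z `&` Z' = set0.
Hypothesis P_subC : forall Z, P Z -> Z `<=` ~` E.
Hypothesis P_cover : forall x, ~ E x -> exists2 Z, P Z & Z x.
Hypothesis P_fin : finite_set P.

Local Notation B := (inB T Tinv conj P).
Local Notation B0 f := (B [:: (0%Z, f)]).
Local Notation chi := (chi K).

Lemma coef_single n (f : X -> K) m x : coef [:: (n, f)] m x = if n == m then f x else 0.
Proof. by rewrite /coef big_cons big_nil /=; case: ifP => _; rewrite ?addr0. Qed.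

Lemma inB_single_ext n (f g : X -> K) : B [:: (n, f)] -> f =1 g -> B [:: (n, g)].
Proof.
move=> Bf fg; apply: inB_eq Bf _; apply/funext => m; apply/funext => x.
by rewrite !coef_single fg.
Qed.

Lemma inB0_add f g : B0 f -> B0 g -> B0 (fun x => f x + g x).
Proof.
move=> Bf Bg; apply: inB_eq (inB_add Bf Bg) _; apply/funext => m; apply/funext => x.
by rewrite coef_single /coef !big_cons big_nil /=; case: eqP; rewrite ?addr0.
Qed.

Lemma inB0_mul f g : B0 f -> B0 g -> B0 (fun x => f x * g x).
Proof. exact: inB_mul. Qed.

Lemma inB0_sum (s : seq (set X)) (F : set X -> X -> K) :
  (forall Z, Z \in s -> B0 (F Z)) -> B0 (fun x => \sum_(Z <- s) F Z x).
Proof.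
elim: s => [|Z s IH] BF.
  by apply: inB_single_ext (inB_scale 0 (inB_one _ _ _ _)) _ => x; rewrite big_nil mul0r.
apply: inB_single_ext (inB0_add (BF Z (mem_head _ _)) (IH _)) _ => [Z' Z's|x].
  by apply: BF; rewrite in_cons Z's orbT.
by rewrite big_cons.
Qed.

Lemma chiI (A A' : set X) x : chi (A `&` A') x = chi A x * chi A' x.
Proof.
rewrite /Defs.chi; case: (asboolP (A x)) => Ax; case: (asboolP (A' x)) => A'x;
  rewrite ?mulr1 ?mulr0 ?mul0r; by [rewrite asboolT|rewrite asboolF => // -[]].
Qed.

Lemma conj_chi (A : set X) x : conj (chi A x) = chi A x.
Proof. by rewrite /Defs.chi; case: asboolP => _; rewrite ?rmorph1 ?rmorph0. Qed.

Lemma chi_mulKr (A : set X) x (a : K) : chi A x * a * chi A x = chi A x * a.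
Proof. by rewrite /Defs.chi; case: asboolP => _; rewrite ?mulr1 ?mulr0 ?mul0r. Qed.

(* realised by [(chi_Z t)^* f (chi_Z t)] *)
Lemma inB0_conjT Z f : P Z -> B0 f -> B0 (fun x => chi Z (T x) * f (T x)).
Proof.
move=> PZ Bf; have BZ := inB_gen T Tinv conj PZ.
apply: inB_single_ext (inB_mul (inB_mul (inB_star BZ) Bf) BZ) _ => x /=.
by rewrite !conj_chi chi_mulKr.
Qed.

(* realised by [(chi_Z t) f (chi_Z t)^*] *)
Lemma inB0_conjTinv Z f : P Z -> B0 f -> B0 (fun x => chi Z x * f (Tinv x)).
Proof.
move=> PZ Bf; have BZ := inB_gen T Tinv conj PZ.
apply: inB_single_ext (inB_mul (inB_mul BZ Bf) (inB_star BZ)) _ => x /=.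
by rewrite conj_chi TinvK chi_mulKr.
Qed.

Lemma sum_chi_P (s : seq (set X)) : uniq s -> (forall Z, P Z <-> Z \in s) ->
  forall y, \sum_(Z <- s) chi Z y = 1 - chi E y.
Proof.
move=> s_uniq Ps y; have [Ey|nEy] := pselect (E y).
  rewrite [chi E y]/Defs.chi asboolT // subrr big1_seq // => Z /andP[_ /Ps PZ].
  by rewrite /Defs.chi asboolF // => /(P_subC PZ).
have [Z0 PZ0 Z0y] := P_cover nEy.
rewrite (bigD1_seq Z0 (iffLR (Ps Z0) PZ0) s_uniq) /= big1_seq => [|Z /andP[ZZ0 /Ps PZ]].
  by rewrite /Defs.chi asboolT // asboolF // addr0 subr0.
rewrite /Defs.chi asboolF // => Zy; move: ZZ0 => /eqP ZZ0.
by have := P_disj PZ PZ0 ZZ0; rewrite -subset0 => /(_ y); apply.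
Qed.

Lemma inB0_chiE_comp (g : X -> X) :
  (forall Z, P Z -> B0 (fun x => chi Z (g x))) -> B0 (fun x => chi E (g x)).
Proof.
move=> BPg; have [s Ps] := (iffLR (finite_seqP P)) P_fin.
have Ps' Z : P Z <-> Z \in undup s by rewrite mem_undup Ps.
have Bsum := inB0_sum (fun Z Zs => BPg Z (iffRL (Ps' Z) Zs)).
apply: inB_single_ext (inB0_add (inB_one _ _ _ _) (inB_scale (-1) Bsum)) _ => x /=.
by rewrite (sum_chi_P (undup_uniq s) Ps') mulN1r opprB addrC subrK.
Qed.

Lemma inB0_itinerary Zs n : (forall i, (i < n)%N -> P (Zs i)) ->
  B0 (fun x => chi (itinerary T E Zs n) (T x)).
Proof.
elim: n Zs => [|n IH] Zs PZs.
  rewrite itinerary0; apply: inB0_chiE_comp => Z PZ.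
  by apply: inB_single_ext (inB0_conjT PZ (inB_one _ _ _ _)) _ => x; rewrite mulr1.
have BI := IH (fun i => Zs i.+1) (fun i ni => PZs i.+1 ni).
rewrite itineraryS; apply: inB_single_ext (inB0_conjT (PZs 0%N isT) BI) _ => x.
by rewrite chiI.
Qed.

Lemma inB0_chiP Z : P Z -> B0 (chi Z).
Proof.
move=> PZ; apply: inB_single_ext (inB0_conjTinv PZ (inB_one _ _ _ _)) _ => x.
by rewrite mulr1.
Qed.

Lemma inB0_inV k W : inV T E P k W -> B0 (chi W).
Proof.
move=> [k0 [Zs [PZs [-> _]]]]; rewrite -/(Vset T E Zs k) Vset_itinerary //.
have BI : B0 (fun x => chi (itinerary T E (fun i => Zs i.+1) k.-1) (T x)).
  by apply: inB0_itinerary => i ik; apply: PZs; rewrite /= -(prednK k0) ltnS.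
apply: inB_single_ext (inB0_mul (inB0_chiE_comp inB0_chiP) BI) _ => x.
by rewrite chiI.
Qed.

Lemma inB0_Pbar Z : Pbar T E P Z -> B0 (chi Z).
Proof.
move=> [k [W [l [VW [lk ->]]]]]; have [_ [Zs [PZs [eW _]]]] := VW.
elim: l lk => [|l IH] lk; first by rewrite image_id; exact: inB0_inV VW.
have l0 : (0 < l.+1 < k)%N by rewrite lk.
have -> : iter l.+1 T @` W = Zs l.+1 `&` Tinv @^-1` (iter l T @` W).
  apply/seteqP; split => [_ [w Ww <-]|x [_ [w Ww eqx]]].
    split; last by exists w; rewrite //= iterS TK.
    by move: Ww; rewrite eW => -[_ [+ _]]; apply.
  by exists w; rewrite // iterS eqx TinvK.
apply: inB_single_ext (inB0_conjTinv (PZs _ l0) (IH (ltnW lk))) _ => x.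
by rewrite chiI.
Qed.

End CrossedProductAlgebra.

Theorem lemma3p9 (R : realType) (X : pseudoPMetricType R)
  (X_hausdorff : hausdorff_space X)
  (X_compact : compact [set: X])
  (X_totdisc : totally_disconnected [set: X])
  (X_infinite : infinite_set [set: X])
  (T Tinv : X -> X)
  (TK : cancel T Tinv) (TinvK : cancel Tinv T)
  (T_cont : continuous T) (Tinv_cont : continuous Tinv)
  (mu : probability (g_sigma_algebraType (@open X)) R)
  (mu_full : forall U : set X, open U -> U !=set0 -> (0 < mu U)%E)
  (mu_inv : forall A : set X, (@open X).-sigma.-measurable A ->
     mu (T @^-1` A) = mu A)
  (mu_erg : forall A : set X, (@open X).-sigma.-measurable A ->
     T @^-1` A = A -> mu A = 0%E \/ mu A = 1%E)
  (K : fieldType) (conj : {rmorphism K -> K}) (conj_inv : involutive conj)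
  (E : set X) (E_ne : E !=set0) (E_clopen : clopen E)
  (P : set (set X)) (P_part : is_partition P (~` E)) :
  (* (1) *)
  ((forall k, (1 <= k)%N -> is_partition (inV T E P k) (Ytower T E k 0)) /\
   quasi_partition (mu : set X -> \bar R) (Pbar T E P)) /\
  (* (2) *)
  (finer (Pbar T E P) (P `|` [set E]) /\ finer (Pbar T E P) (Yfamily T E)) /\
  (* (3) *)
  tower_closed T E (Pbar T E P) /\
  (* coarsest quasi-partition with (2) and (3) *)
  (forall Q : set (set X), quasi_partition (mu : set X -> \bar R) Q ->
     finer Q (P `|` [set E]) -> finer Q (Yfamily T E) ->
     tower_closed T E Q -> finer Q (Pbar T E P)) /\
  (* chi_Zbar in B *)
  (forall Zb, Pbar T E P Zb ->
     inB T Tinv conj P [:: (0%Z, chi K Zb)]).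
Proof.
have [P_fin P_clopen P_disj P_subC P_cover] := partitionC_props P_part.
have mu_E := mu_full E (proj1 E_clopen) E_ne.
split; [split|split; [split|split; [|split]]].
- by move=> k _; exact: inV_partition.
- exact: Pbar_quasi_partition mu_inv mu_erg.
- exact: Pbar_subset_PE.
- exact: Pbar_subset_Ytower.
- by move=> Z k i; exact: Pbar_tower_closed.
- move=> Q Qq; exact: (finer_Pbar TK T_cont Qq.2.1 (quasi_partition_dense mu_full Qq)).
- by move=> Z; exact: inB0_Pbar.
Qed.
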